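(* Let $p \in \mathbb S$ be skew and let $t \in {}^\omega 2$ with $t \neq 0$. Then $|[p] \cap ([p] + t)| \leq 2$. In particular, $p$ and $p + t$ are incompatible in $\mathbb S$.
   Context: ${}^\omega 2$ is the Cantor space with bitwise addition modulo $2$; $0$ is the constant zero sequence. $\mathbb S$ is the set of perfect subtrees of ${}^{<\omega}2$, ordered by inclusion; $[p]$ is the set of branches of $p$; $p,q\in\mathbb S$ are compatible if some $r\in\mathbb S$ satisfies $r\subseteq p$ and $r\subseteq q$. For $p\in\mathbb S$ and $t\in{}^\omega 2$, $p+t=\{\sigma+t\restriction|\sigma| : \sigma\in p\}$. A node $\sigma\in p$ is splitting if both $\sigma^\frown 0,\sigma^\frown 1\in p$. A tree $p\in\mathbb S$ is skew if for every $n\in\omega$ there is at most one splitting node of $p$ of length $n$. *)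

From mathcomp Require Import all_boot.
Set Implicit Arguments. Unset Strict Implicit. Unset Printing Implicit Defensive.

Definition cantor := nat -> bool.
Definition node := seq bool.

Definition restr (t : cantor) (n : nat) : node := mkseq t n.

Definition cadd (x t : cantor) : cantor := fun n => addb (x n) (t n).

Definition nadd (s : node) (t : cantor) : node :=
  [seq addb (nth false s i) (t i) | i <- iota 0 (size s)].

Definition is_tree (p : node -> Prop) : Prop :=
  p [::] /\ forall s n, p s -> p (take n s).

Definition splitting (p : node -> Prop) (s : node) : Prop :=
  p (rcons s false) /\ p (rcons s true).

Definition perfect (p : node -> Prop) : Prop :=
  is_tree p /\ forall s, p s -> exists u, prefix s u /\ p u /\ splitting p u.

Definition branches (p : node -> Prop) (x : cantor) : Prop :=
  forall n, p (restr x n).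

Definition tadd (p : node -> Prop) (t : cantor) : node -> Prop :=
  fun u => exists s, p s /\ u = nadd s t.

Definition branches_add (p : node -> Prop) (t : cantor) : cantor -> Prop :=
  fun x => exists y, branches p y /\ x = cadd y t.

Definition compatible (p q : node -> Prop) : Prop :=
  exists r, perfect r /\ (forall s, r s -> p s) /\ (forall s, r s -> q s).

Definition skew (p : node -> Prop) : Prop :=
  forall s1 s2, splitting p s1 -> splitting p s2 -> size s1 = size s2 -> s1 = s2.

(* Let n be the first position with t n = true. If x and x + t are both branches of p,
   they agree below n and differ at n, so x|n is a splitting node; by skewness it is the
   same node for every such x. Two such branches x, x' with x n = x' n must coincide:
   at their first difference m > n both x|m and (x + t)|m split, and skewness forces
   x|m = (x + t)|m, i.e. t vanishes below m, contradicting t n = true. Hence x is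
   determined by the bit x n. Similarly, a common perfect subtree r of p and p + t has a
   splitting node u longer than n; then u and u + t both split in p, which is impossible. *)
From Stdlib Require Import Classical FunctionalExtensionality.
From mathcomp Require Import all_boot.

Set Implicit Arguments.
Unset Strict Implicit.
Unset Printing Implicit Defensive.

Lemma size_nadd s t : size (nadd s t) = size s.
Proof. by rewrite /nadd size_map size_iota. Qed.

Lemma nth_nadd s t i :
  i < size s -> nth false (nadd s t) i = addb (nth false s i) (t i).
Proof. by move=> hi; rewrite /nadd (nth_map 0) ?size_iota // nth_iota. Qed.

Lemma naddK t : cancel (nadd^~ t) (nadd^~ t).
Proof.
move=> s; apply: (@eq_from_nth _ false); rewrite !size_nadd // => i hi.
by rewrite nth_nadd ?size_nadd // nth_nadd // addbK.
Qed.

Lemma nadd_rcons u b t :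
  nadd (rcons u b) t = rcons (nadd u t) (addb b (t (size u))).
Proof.
apply: (@eq_from_nth _ false); rewrite ?size_nadd !size_rcons ?size_nadd // => i.
rewrite ltnS leq_eqVlt => /orP[/eqP-> | hi].
  by rewrite nth_nadd ?size_rcons // !nth_rcons size_nadd !ltnn !eqxx.
by rewrite nth_nadd ?size_rcons 1?ltnW // !nth_rcons size_nadd hi nth_nadd.
Qed.

Lemma caddK t : cancel (cadd^~ t) (cadd^~ t).
Proof. by move=> x; apply: functional_extensionality => i; rewrite /cadd addbK. Qed.

Lemma restr_cadd x t m : restr (cadd x t) m = nadd (restr x m) t.
Proof.
apply: (@eq_from_nth _ false); rewrite ?size_nadd !size_mkseq // => i hi.
by rewrite nth_nadd ?size_mkseq // !nth_mkseq.
Qed.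

Lemma restrS x k : restr x k.+1 = rcons (restr x k) (x k).
Proof. by rewrite /restr -addn1 /mkseq iotaD map_cat cats1. Qed.

Lemma eq_restr x y k : (forall i, i < k -> x i = y i) -> restr x k = restr y k.
Proof. by move=> h; apply/eq_in_map => i; rewrite mem_iota add0n => /h. Qed.

Lemma branches_add_cadd p t x : branches_add p t x -> branches p (cadd x t).
Proof. by move=> [y [py ->]]; rewrite caddK. Qed.

Lemma exists_first_true (t : cantor) :
  t <> (fun _ => false) -> exists n, t n /\ forall i, i < n -> t i = false.
Proof.
move=> tN0; have [n tn] : exists n, t n.
  apply: NNPP => none; apply: tN0; apply: functional_extensionality => n.
  by apply/negbTE/negP => tn; apply: none; exists n.
have ex : exists n, t n by exists n.
case: (ex_minnP ex) => m tm min_m; exists m; split=> // i lt_im.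
by apply/negbTE/negP => /min_m; rewrite leqNgt lt_im.
Qed.

Lemma splitting_branches p a b k :
  branches p a -> branches p b -> (forall i, i < k -> a i = b i) -> a k <> b k ->
  splitting p (restr a k).
Proof.
move=> pa pb eq_ab neq_k; have := pa k.+1; have := pb k.+1.
rewrite !restrS (eq_restr eq_ab).
by case: (a k) (b k) neq_k => [] [] // ? ?; split.
Qed.

Lemma perfect_splitting_deep r :
  perfect r -> forall m, exists u, r u /\ splitting r u /\ m <= size u.
Proof.
move=> [[r0 _] split_above]; elim => [|m [u [_ [[ru0 _] le_mu]]]].
  by have [u [_ [ru su]]] := split_above _ r0; exists u.
have [v [uv [rv sv]]] := split_above _ ru0; exists v; split=> //; split=> //.
by apply: leq_trans (size_prefix uv); rewrite size_rcons.
Qed.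

Lemma splitting_tadd p t u : splitting (tadd p t) u -> splitting p (nadd u t).
Proof.
have back b : tadd p t (rcons u b) -> p (rcons (nadd u t) (addb b (t (size u)))).
  by move=> [s [ps e]]; rewrite -nadd_rcons e naddK.
by move=> [/back p0 /back p1]; case: (t (size u)) p0 p1; split.
Qed.

(* Two splitting nodes of the same length coincide, so [t] must act trivially on [u]. *)
Lemma skew_splitting_nadd p t u :
  skew p -> splitting p u -> splitting p (nadd u t) ->
  forall i, i < size u -> t i = false.
Proof.
move=> skew_p su sut i lt_iu.
have := congr1 (nth false ^~ i) (skew_p _ _ su sut (esym (size_nadd u t))).
by rewrite /= nth_nadd //; case: (nth false u i); case: (t i).
Qed.

Lemma skew_incompatible_tadd p (t : cantor) n :
  skew p -> t n -> ~ compatible p (tadd p t).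
Proof.
move=> skew_p tn [r [perfect_r [rp rpt]]].
have [u [_ [[ru0 ru1] lt_nu]]] := perfect_splitting_deep perfect_r n.+1.
have sp : splitting p u by split; apply: rp.
have spt : splitting p (nadd u t) by apply: splitting_tadd; split; apply: rpt.
by rewrite (skew_splitting_nadd skew_p sp spt lt_nu) in tn.
Qed.

Section SkewTranslate.

Variables (p : node -> Prop) (t : cantor) (n : nat).
Hypotheses (skew_p : skew p) (tn : t n) (t_lt_n : forall i, i < n -> t i = false).

Lemma splitting_first_true x :
  branches p x -> branches p (cadd x t) -> splitting p (restr x n).
Proof.
move=> px pxt; apply: splitting_branches px pxt _ _.
  by move=> i /t_lt_n ti; rewrite /cadd ti addbF.
by rewrite /cadd tn; case: (x n).
Qed.

Lemma translate_branches_eq x y :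
  branches p x -> branches p (cadd x t) ->
  branches p y -> branches p (cadd y t) -> x n = y n -> x = y.
Proof.
move=> px pxt py pyt eq_n; apply: functional_extensionality => m.
elim/ltn_ind: m => m eq_lt_m; apply: NNPP => neq_m.
have sx := splitting_branches px py eq_lt_m neq_m.
have sxt : splitting p (restr (cadd x t) m).
  apply: splitting_branches pxt pyt _ _; first by move=> i /eq_lt_m; rewrite /cadd => ->.
  by rewrite /cadd; case: (t m) neq_m; case: (x m); case: (y m).
rewrite restr_cadd in sxt.
have t_lt_m := skew_splitting_nadd skew_p sx sxt.
case: (ltngtP m n) => [lt_mn | lt_nm | eq_mn].
- have eq_restr_n : restr x n = restr y n.
    by apply: skew_p; rewrite ?size_mkseq //; apply: splitting_first_true.
  by apply: neq_m; have := congr1 (nth false ^~ m) eq_restr_n; rewrite /= !nth_mkseq.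
- by move: tn; rewrite t_lt_m ?size_mkseq.
- by apply: neq_m; rewrite eq_mn.
Qed.

End SkewTranslate.

Theorem lemma2p6 (p : node -> Prop) (t : cantor) :
  perfect p -> skew p -> t <> (fun _ => false) ->
  (* |[p] ∩ ([p] + t)| <= 2 *)
  (forall x y z : cantor,
     branches p x /\ branches_add p t x ->
     branches p y /\ branches_add p t y ->
     branches p z /\ branches_add p t z ->
     x = y \/ x = z \/ y = z) /\
  ~ compatible p (tadd p t).
Proof.
move=> _ skew_p /exists_first_true [n [tn t_lt_n]].
split; last exact: skew_incompatible_tadd skew_p tn.
have eq_at := translate_branches_eq skew_p tn t_lt_n.
move=> x y z [px /branches_add_cadd pxt] [py /branches_add_cadd pyt]
  [pz /branches_add_cadd pzt].
case ex: (x n); case ey: (y n); case ez: (z n);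
  first [ left; apply: eq_at; by rewrite ?ex ?ey
        | right; left; apply: eq_at; by rewrite ?ex ?ez
        | right; right; apply: eq_at; by rewrite ?ey ?ez ].
Qed.
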